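(* Let $n_b\ge1$, $\alpha>0$, $l_0>0$, $\gamma\in[0,1)$ and $p_{in},p_{out}\in[0,1]$ satisfy either ($p_{in}>p_{out}$ and $1-p_{in}>p_{out}$) or ($p_{out}>p_{in}$ and $1-p_{out}>p_{in}$). Consider a random network on $2n_b$ nodes split into blocks $\mathcal B_1,\mathcal B_2$ of size $n_b$, with $\mathbf W=\alpha\mathbf A$, where $\mathbf A$ is a symmetric $0/1$ matrix whose entries $A_{ij}$, $i\le j$ (diagonal included), are independent Bernoulli with parameter $p_{in}$ if $v_i,v_j$ are in the same block and $p_{out}$ otherwise. Run the GIP model with $l_{j,0}=h_{j,0}=l_0$ and $l_{j,1}=2\alpha l_0$ for all $v_j$, from the initial state $x_i(0)=l_0$ for $v_i\in\mathcal A_0$ and $0$ otherwise. Consider (i) $\mathcal A_0=\{v_{i_1},v_{i_2},v_{i_3},v_{i_4}\}\subset\mathcal B_1$ and (ii) $\mathcal A_0=\{v_{j_1},v_{j_2},v_{j_3},v_{j_4}\}$ with $v_{j_1},v_{j_2}\in\mathcal B_1$, $v_{j_3},v_{j_4}\in\mathcal B_2$. For each choice, let $\Delta$ be the increase of $\mathbb E[\sum_j(1-\gamma)x_j(1)]$ (expectation over the random network) when $h_{j,1}$ is raised from $h_{j,1}=2\alpha l_0$ to $h_{j,1}=4\alpha l_0$ for all $v_j$. Then $\Delta$ for (i) is strictly larger than $\Delta$ for (ii).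
   Context: The general information propagation (GIP) model on a network with weighted adjacency matrix $\mathbf W=(W_{ij})$, $W_{ij}\ge0$, with lower bounds $\{l_{j,t}\}$ and upper bounds $\{h_{j,t}\}$ ($0\le l_{j,t}\le h_{j,t}$, $l_{j,0}>0$) is the dynamics $x_j(t)=f_{j,t}(\sum_i W_{ij}x_i(t-1))$ for $t>0$, where $f_{j,t}(x)=0$ if $x<l_{j,t}$, $f_{j,t}(x)=x$ if $l_{j,t}\le x<h_{j,t}$, $f_{j,t}(x)=h_{j,t}$ if $x\ge h_{j,t}$, and initial values $x_j(0)\in\{0\}\cup[l_{j,0},h_{j,0}]$. *)

From HB Require Import structures.
From mathcomp Require Import all_boot all_order all_algebra.
Set Implicit Arguments. Unset Strict Implicit. Unset Printing Implicit Defensive.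
Import Order.TTheory GRing.Theory Num.Theory.
Local Open Scope ring_scope.

Section GIP.
Variable R : realFieldType.

Definition gip_f (l h x : R) : R :=
  if x < l then 0 else if x < h then x else h.

Fixpoint gip (n : nat) (W : 'M[R]_n) (l h : nat -> 'I_n -> R)
    (x0 : 'I_n -> R) (t : nat) : 'I_n -> R :=
  match t with
  | 0 => x0
  | t'.+1 => fun j => gip_f (l t j) (h t j)
                        (\sum_(i < n) W i j * gip W l h x0 t' i)
  end.

Definition inB1 (nb : nat) (i : 'I_(nb + nb)) : bool := (i < nb)%N.

Definition edge_prob (nb : nat) (pin pout : R) (i j : 'I_(nb + nb)) : R :=
  if inB1 i == inB1 j then pin else pout.

Definition symmetricb (n : nat) (A : 'M[bool]_n) : bool :=
  [forall i, forall j, A i j == A j i].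

(* Probability of the symmetric 0/1 matrix A: independent Bernoulli entries
   A_ij for i <= j (diagonal included); non-symmetric matrices have prob 0. *)
Definition sbm_prob (nb : nat) (pin pout : R) (A : 'M[bool]_(nb + nb)) : R :=
  if symmetricb A then
    \prod_(i < nb + nb) \prod_(j < nb + nb | (i <= j)%N)
       (if A i j then edge_prob pin pout i j else 1 - edge_prob pin pout i j)
  else 0.

Definition weight_of (n : nat) (alpha : R) (A : 'M[bool]_n) : 'M[R]_n :=
  \matrix_(i, j) (alpha * (A i j)%:R).

(* bounds: l_{j,0} = h_{j,0} = l0; for t >= 1, l_{j,t} = 2 alpha l0 and
   h_{j,t} = c alpha l0 (only t = 0, 1 matter for x(1)). *)
Definition lowb (n : nat) (alpha l0 : R) : nat -> 'I_n -> R :=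
  fun t _ => if t == 0%N then l0 else 2 * alpha * l0.
Definition upb (n : nat) (alpha l0 c : R) : nat -> 'I_n -> R :=
  fun t _ => if t == 0%N then l0 else c * alpha * l0.

Definition init_state (n : nat) (l0 : R) (A0 : {set 'I_n}) : 'I_n -> R :=
  fun i => if i \in A0 then l0 else 0.

Definition expected_out (nb : nat) (alpha l0 gamma pin pout c : R)
    (A0 : {set 'I_(nb + nb)}) : R :=
  \sum_(A : 'M[bool]_(nb + nb))
     sbm_prob pin pout A *
     \sum_(j < nb + nb)
        (1 - gamma) * gip (weight_of alpha A) (@lowb (nb + nb) alpha l0)
                          (@upb (nb + nb) alpha l0 c) (init_state l0 A0) 1 j.

Definition delta_gain (nb : nat) (alpha l0 gamma pin pout : R)
    (A0 : {set 'I_(nb + nb)}) : R :=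
  expected_out alpha l0 gamma pin pout 4 A0
  - expected_out alpha l0 gamma pin pout 2 A0.

End GIP.

From HB Require Import structures.
From mathcomp Require Import all_boot all_order all_algebra ring lra.
Set Implicit Arguments. Unset Strict Implicit. Unset Printing Implicit Defensive.
Import Order.TTheory GRing.Theory Num.Theory.
Local Open Scope ring_scope.

(* At time 1 node j receives alpha l0 k, where k is the number of seeds
   adjacent to j, so raising h_{j,1} from 2 alpha l0 to 4 alpha l0 gains
   alpha l0 ([k = 3] + 2 [k = 4]) at j.  This gain is the multilinear
   polynomial e_3 - 2 e_4 of the four adjacency bits; the four edges at j are
   independent, so its expectation is the same polynomial of the four edge
   probabilities.  Summing over both blocks, Delta(i) - Delta(ii) equals
   nb (1 - gamma) alpha l0 * 2 (pin - pout)^2 (pin + pout) (2 - pin - pout),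
   which is positive under the hypotheses. *)

Section BernoulliProduct.
Variables (R : comPzRingType) (K : finType) (p : K -> R).

Definition bernoulli_weight (f : {ffun K -> bool}) : R :=
  \prod_k (if f k then p k else 1 - p k).

Lemma bernoulli_moment (T : seq K) : uniq T ->
  \sum_(f : {ffun K -> bool}) bernoulli_weight f * \prod_(k <- T) (f k)%:R
  = \prod_(k <- T) p k.
Proof.
move=> uT; rewrite (big_uniq _ uT) [RHS]big_mkcond /=.
under eq_bigr => f _ do rewrite (big_uniq _ uT) big_mkcond -big_split /=.
rewrite -(bigA_distr_bigA
  (fun k (b : bool) => (if b then p k else 1 - p k) * (if k \in T then b%:R else 1))).
apply: eq_bigr => k _; rewrite big_bool /=.
by case: (k \in T); rewrite ?mulr1 ?mulr0 ?addr0 // addrC subrK.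
Qed.

End BernoulliProduct.

Section CapGain.
Variable R : comPzRingType.

Definition cap_gain (x1 x2 x3 x4 : R) : R :=
  x1 * x2 * x3 + x1 * x2 * x4 + x1 * x3 * x4 + x2 * x3 * x4
  - 2 * (x1 * x2 * x3 * x4).

Lemma cap_gain_bits (b1 b2 b3 b4 : bool) :
  cap_gain b1%:R b2%:R b3%:R b4%:R
  = (b1 + b2 + b3 + b4 == 3)%N%:R + 2 * (b1 + b2 + b3 + b4 == 4)%N%:R.
Proof. by rewrite /cap_gain; case: b1; case: b2; case: b3; case: b4 => /=; ring. Qed.

Lemma cap_gain_block_gap (p q : R) :
  cap_gain p p p p + cap_gain q q q q - (cap_gain p p q q + cap_gain q q p p)
  = 2 * (p - q) ^+ 2 * (p + q) * (2 - p - q).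
Proof. by rewrite /cap_gain; ring. Qed.

End CapGain.

Section SymmetricBernoulli.
Variables (R : comPzRingType) (n : nat).

Definition upper : {pred 'I_n * 'I_n} := [pred k : 'I_n * 'I_n | (k.1 <= k.2)%N].

Definition sort_pair (i j : 'I_n) : 'I_n * 'I_n :=
  if (i <= j)%N then (i, j) else (j, i).

Lemma sort_pair_upper i j : sort_pair i j \in upper.
Proof. by rewrite /sort_pair; case: leqP => h; rewrite inE /= ?h // ltnW. Qed.

Definition upper_pair i j : {k in upper} := Sub (sort_pair i j) (sort_pair_upper i j).

Lemma upper_pairC i j : upper_pair i j = upper_pair j i.
Proof.
apply: val_inj; rewrite /= /sort_pair.
by case: (ltngtP i j) => [lt_ij | lt_ji | /val_inj ->].
Qed.

Lemma upper_pair_val (k : {k in upper}) : upper_pair (val k).1 (val k).2 = k.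
Proof.
by apply: val_inj; have := valP k; rewrite inE /= /sort_pair => ->; case: (val k).
Qed.

Lemma upper_pair_injl j : injective (upper_pair ^~ j).
Proof.
move=> x y /(congr1 val); rewrite /= /sort_pair.
by case: (leqP x j); case: (leqP y j) => _ _ [] *; congruence.
Qed.

Definition symmx_of_upper (f : {ffun {k in upper} -> bool}) : 'M[bool]_n :=
  \matrix_(i, j) f (upper_pair i j).

Definition upper_of_symmx (A : 'M[bool]_n) : {ffun {k in upper} -> bool} :=
  [ffun k => A (val k).1 (val k).2].

Lemma symmx_of_upper_sym f : symmetricb (symmx_of_upper f).
Proof. by apply/forallP => i; apply/forallP => j; rewrite !mxE upper_pairC. Qed.

Lemma symmx_of_upperK : cancel symmx_of_upper upper_of_symmx.
Proof. by move=> f; apply/ffunP => k; rewrite ffunE mxE upper_pair_val. Qed.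

Lemma upper_of_symmxK A : symmetricb A -> symmx_of_upper (upper_of_symmx A) = A.
Proof.
move=> /forallP symA; apply/matrixP => i j; rewrite mxE ffunE /= /sort_pair.
by case: leqP => // _; move/forallP: (symA j) => /(_ i) /eqP.
Qed.

Variable ep : 'I_n -> 'I_n -> R.

Definition sym_bernoulli_prob (A : 'M[bool]_n) : R :=
  if symmetricb A then
    \prod_(i < n) \prod_(j < n | (i <= j)%N)
       (if A i j then ep i j else 1 - ep i j)
  else 0.

Let ep_upper (k : {k in upper}) : R := ep (val k).1 (val k).2.

Lemma sym_bernoulli_prob_upper f :
  sym_bernoulli_prob (symmx_of_upper f) = bernoulli_weight ep_upper f.
Proof.
rewrite /sym_bernoulli_prob symmx_of_upper_sym pair_big_dep /=.
rewrite (eq_bigl (mem upper)) // big_sub; apply: eq_bigr => k _.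
by rewrite mxE upper_pair_val.
Qed.

Lemma sym_bernoulli_mean (F : 'M[bool]_n -> R) :
  \sum_A sym_bernoulli_prob A * F A
  = \sum_f bernoulli_weight ep_upper f * F (symmx_of_upper f).
Proof.
rewrite (bigID (@symmetricb n)) /= [X in _ + X]big1 ?addr0; last first.
  by move=> A /negbTE asym; rewrite /sym_bernoulli_prob asym mul0r.
rewrite (reindex_onto symmx_of_upper upper_of_symmx) /=; last exact: upper_of_symmxK.
apply: eq_big => [f | f _]; last by rewrite sym_bernoulli_prob_upper.
by rewrite symmx_of_upper_sym symmx_of_upperK eqxx.
Qed.

Hypothesis ep_sym : forall i j, ep i j = ep j i.

Lemma sym_bernoulli_moment (S : seq ('I_n * 'I_n)) :
  uniq [seq upper_pair k.1 k.2 | k <- S] ->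
  \sum_A sym_bernoulli_prob A * \prod_(k <- S) (A k.1 k.2)%:R
  = \prod_(k <- S) ep k.1 k.2.
Proof.
move=> uS; rewrite sym_bernoulli_mean /=.
have prodE f : \prod_(k <- S) (symmx_of_upper f k.1 k.2)%:R
             = \prod_(u <- [seq upper_pair k.1 k.2 | k <- S]) (f u)%:R :> R.
  by rewrite big_map; apply: eq_bigr => k _; rewrite mxE.
under eq_bigr => f _ do rewrite prodE.
rewrite bernoulli_moment // big_map; apply: eq_bigr => k _.
by rewrite /ep_upper /= /sort_pair; case: leqP.
Qed.

Lemma sym_bernoulli_star (S : seq 'I_n) (j : 'I_n) : uniq S ->
  \sum_A sym_bernoulli_prob A * \prod_(i <- S) (A i j)%:R
  = \prod_(i <- S) ep i j.
Proof.
move=> uS.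
transitivity (\sum_A sym_bernoulli_prob A *
                \prod_(k <- [seq (i, j) | i <- S]) (A k.1 k.2)%:R).
  by apply: eq_bigr => A _; rewrite big_map.
rewrite sym_bernoulli_moment ?big_map // -map_comp map_inj_uniq //.
exact: upper_pair_injl.
Qed.

Lemma sym_bernoulli_cap_gain (a b c d j : 'I_n) : uniq [:: a; b; c; d] ->
  \sum_A sym_bernoulli_prob A * cap_gain (A a j)%:R (A b j)%:R (A c j)%:R (A d j)%:R
  = cap_gain (ep a j) (ep b j) (ep c j) (ep d j).
Proof.
move=> uniq_abcd; set s := [:: a; b; c; d].
pose mono (A : 'M[bool]_n) (m : bitseq) : R := \prod_(i <- mask m s) (A i j)%:R.
have monoE m : \sum_A sym_bernoulli_prob A * mono A m = \prod_(i <- mask m s) ep i j.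
  exact/sym_bernoulli_star/mask_uniq.
transitivity (\sum_A sym_bernoulli_prob A *
  (mono A [:: true; true; true] + mono A [:: true; true; false; true]
   + mono A [:: true; false; true; true] + mono A [:: false; true; true; true]
   - 2 * mono A [:: true; true; true; true])).
  by apply: eq_bigr => A _; rewrite /mono /= !big_cons big_nil /cap_gain !mulr1 !mulrA.
under eq_bigr => A _ do rewrite mulrBr mulrCA !mulrDr.
by rewrite sumrB !big_split -mulr_sumr /= !monoE /= !big_cons big_nil /cap_gain !mulr1 !mulrA.
Qed.

End SymmetricBernoulli.

Section GipOneStep.
Variable R : realFieldType.

Lemma big_set4 (T : finType) (a b c d : T) (F : T -> R) : uniq [:: a; b; c; d] ->
  \sum_(i in [set a; b; c; d]) F i = F a + F b + F c + F d.
Proof.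
move=> uniq_abcd; rewrite (eq_bigl (mem [:: a; b; c; d])) => [|i]; last first.
  by rewrite !inE !orbA.
by rewrite -big_uniq // !big_cons big_nil /= addr0 !addrA.
Qed.

Lemma gip_input n (alpha l0 : R) (A : 'M[bool]_n) (S : {set 'I_n}) (j : 'I_n) :
  \sum_i weight_of alpha A i j * init_state l0 S i
  = alpha * l0 * \sum_(i in S) (A i j)%:R.
Proof.
rewrite mulr_sumr [RHS]big_mkcond; apply: eq_bigr => i _.
by rewrite /init_state mxE; case: ifP => _; rewrite ?mulr0 // mulrAC.
Qed.

Lemma gip_f_cap_gain (x : R) (k : nat) : 0 < x -> (k <= 4)%N ->
  gip_f (2 * x) (4 * x) (k%:R * x) - gip_f (2 * x) (2 * x) (k%:R * x)
  = ((k == 3)%N%:R + 2 * (k == 4)%N%:R) * x.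
Proof.
move=> x_gt0 k_le4; rewrite /gip_f !ltr_pM2r // -[2]/(2%:R) -[4]/(4%:R) !ltr_nat.
by case: k k_le4 => [|[|[|[|[|k]]]]] //= _; ring.
Qed.

Lemma gip_cap_gain n (alpha l0 : R) (A : 'M[bool]_n) (a b c d j : 'I_n) :
  0 < alpha -> 0 < l0 -> uniq [:: a; b; c; d] ->
  gip (weight_of alpha A) (lowb alpha l0) (upb alpha l0 4)
      (init_state l0 [set a; b; c; d]) 1 j
  - gip (weight_of alpha A) (lowb alpha l0) (upb alpha l0 2)
      (init_state l0 [set a; b; c; d]) 1 j
  = cap_gain (A a j)%:R (A b j)%:R (A c j)%:R (A d j)%:R * (alpha * l0).
Proof.
move=> alpha_gt0 l0_gt0 uniq_abcd.
rewrite /= gip_input big_set4 // -!natrD mulrC /lowb /upb /= -!mulrA.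
rewrite gip_f_cap_gain ?mulr_gt0 ?cap_gain_bits //.
by case: (A a j); case: (A b j); case: (A c j); case: (A d j).
Qed.

End GipOneStep.

Section TwoBlocks.
Variable R : realFieldType.

Lemma edge_probC nb (pin pout : R) (i j : 'I_(nb + nb)) :
  edge_prob pin pout i j = edge_prob pin pout j i.
Proof. by rewrite /edge_prob eq_sym. Qed.

Lemma sbm_probE nb (pin pout : R) :
  @sbm_prob R nb pin pout = sym_bernoulli_prob (edge_prob pin pout).
Proof. by []. Qed.

Lemma delta_gain_mean nb (alpha l0 gamma pin pout : R) (a b c d : 'I_(nb + nb)) :
  0 < alpha -> 0 < l0 -> uniq [:: a; b; c; d] ->
  delta_gain alpha l0 gamma pin pout [set a; b; c; d]
  = (1 - gamma) * (alpha * l0) *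
    \sum_j cap_gain (edge_prob pin pout a j) (edge_prob pin pout b j)
                    (edge_prob pin pout c j) (edge_prob pin pout d j).
Proof.
move=> alpha_gt0 l0_gt0 uniq_abcd.
rewrite /delta_gain /expected_out sbm_probE -sumrB.
under eq_bigr => A _ do rewrite -mulrBr -sumrB.
under eq_bigr => A _ do under eq_bigr => j _ do rewrite -mulrBr gip_cap_gain //.
under eq_bigr => A _ do rewrite mulr_sumr.
rewrite exchange_big mulr_sumr; apply: eq_bigr => j _ /=.
rewrite -(sym_bernoulli_cap_gain (@edge_probC nb pin pout)) // mulr_sumr.
by apply: eq_bigr => A _; ring.
Qed.

Lemma sum_two_blocks nb (F : 'I_(nb + nb) -> R) (x y : R) :
  (forall j, F j = if inB1 j then x else y) -> \sum_j F j = (x + y) *+ nb.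
Proof.
move=> FE; rewrite big_split_ord mulrnDl; congr (_ + _).
  rewrite (eq_bigr (fun=> x)) => [|i _]; first by rewrite sumr_const card_ord.
  by rewrite FE /inB1 /= ltn_ord.
rewrite (eq_bigr (fun=> y)) => [|i _]; first by rewrite sumr_const card_ord.
by rewrite FE /inB1 /= ltnNge leq_addr.
Qed.

End TwoBlocks.

Theorem claim3 (R : realFieldType) (nb : nat) (alpha l0 gamma pin pout : R)
  (i1 i2 i3 i4 j1 j2 j3 j4 : 'I_(nb + nb)) :
  (1 <= nb)%N -> 0 < alpha -> 0 < l0 -> 0 <= gamma -> gamma < 1 ->
  0 <= pin <= 1 -> 0 <= pout <= 1 ->
  ((pin > pout /\ 1 - pin > pout) \/ (pout > pin /\ 1 - pout > pin)) ->
  uniq [:: i1; i2; i3; i4] ->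
  inB1 i1 -> inB1 i2 -> inB1 i3 -> inB1 i4 ->
  uniq [:: j1; j2; j3; j4] ->
  inB1 j1 -> inB1 j2 -> ~~ inB1 j3 -> ~~ inB1 j4 ->
  delta_gain alpha l0 gamma pin pout [set i1; i2; i3; i4]
  > delta_gain alpha l0 gamma pin pout [set j1; j2; j3; j4].
Proof.
move=> nb_gt0 alpha_gt0 l0_gt0 _ gamma_lt1 /andP[pin_ge0 _] /andP[pout_ge0 _] pq
  uniq_i i1B1 i2B1 i3B1 i4B1 uniq_j j1B1 j2B1 j3B2 j4B2.
rewrite -subr_gt0 !delta_gain_mean // -mulrBr.
rewrite (@sum_two_blocks _ _ _ (cap_gain pin pin pin pin) (cap_gain pout pout pout pout));
  last by move=> j; rewrite /edge_prob i1B1 i2B1 i3B1 i4B1; case: inB1.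
rewrite (@sum_two_blocks _ _ _ (cap_gain pin pin pout pout) (cap_gain pout pout pin pin));
  last by move=> j; rewrite /edge_prob j1B1 j2B1 (negbTE j3B2) (negbTE j4B2); case: inB1.
rewrite -mulrnBl cap_gain_block_gap.
apply: mulr_gt0; first by rewrite !mulr_gt0 // subr_gt0.
have sq_gt0 : 0 < (pin - pout) ^+ 2.
  rewrite exprn_even_gt0 //= subr_eq0.
  by case: pq => -[pq_lt _]; [rewrite gt_eqF | rewrite lt_eqF].
(* Generalize the square, which [mulr_gt0] would otherwise split into a product. *)
move: ((pin - pout) ^+ 2) sq_gt0 => sq sq_gt0.
by rewrite pmulrn_lgt0 // !mulr_gt0 //; lra.
Qed.
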